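(* Let $\Omega\subset\mathbb{R}^d$ be nonempty, convex and compact with diameter $D$, and let $F(x)=\frac1n\sum_{i=1}^n f_i(x)$ where each $f_i$ is differentiable and $L$-smooth. Let $x^*\in\arg\min_{x\in\Omega}F(x)$, $x_0\in\Omega$, $\beta>0$ with $\beta\ge\frac{2(F(x_0)-F(x^* ))}{LD^2}$, let $m\ge1$ be an integer and $T$ a positive multiple of $m$. Run SVFW (defined in the context) with epoch size $m$, $S=T/m$ epochs, constant step size $\gamma_t=\gamma=\sqrt{\frac{F(x_0)-F(x^* )}{TLD^2\beta}}$ and minibatch size $b_t=b=m^2$ for all $t\in\{0,\dots,m-1\}$. Then the output $x_a$ satisfies $$\mathbb{E}[\mathcal{G}(x_a)]\le\frac{2D}{\sqrt{T\beta}}\sqrt{L(F(x_0)-F(x^* ))}\,(1+\beta).$$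
   Context: $f_i$ is $L$-smooth means $\|\nabla f_i(x)-\nabla f_i(y)\|\le L\|x-y\|$ for all $x,y\in\Omega$; diameter $D$ means $\|x-y\|\le D$ for all $x,y\in\Omega$. Frank–Wolfe gap: $\mathcal{G}(x)=\max_{v\in\Omega}\langle v-x,-\nabla F(x)\rangle$. Algorithm SVFW (input $x_0$, epoch size $m$, number of epochs $S$, step sizes $\gamma_t\in[0,1]$, minibatch sizes $b_t$, $t=0,\dots,m-1$): set $x^0_m=x_0$. For $s=0,\dots,S-1$: let $\tilde x^s=x^s_m$, compute $\tilde g^s=\nabla F(\tilde x^s)$, set $x^{s+1}_0=\tilde x^s$; for $t=0,\dots,m-1$: draw a multiset $I_t$ of $b_t$ indices uniformly at random with replacement from $\{1,\dots,n\}$ (independently of the past), set $\tilde\nabla_t=\frac{1}{b_t}\sum_{i\in I_t}\big(\nabla f_i(x^{s+1}_t)-\nabla f_i(\tilde x^s)\big)+\tilde g^s$, compute $v^{s+1}_t\in\arg\max_{v\in\Omega}\langle v,-\tilde\nabla_t\rangle$ and set $x^{s+1}_{t+1}=x^{s+1}_t+\gamma_t(v^{s+1}_t-x^{s+1}_t)$. The output $x_a$ is chosen uniformly at random from $\{x^{s+1}_t: 0\le t\le m-1,\ 0\le s\le S-1\}$. *)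

From Stdlib Require Import Reals ClassicalEpsilon.
From mathcomp Require Import all_boot.
Set Implicit Arguments. Unset Strict Implicit. Unset Printing Implicit Defensive.

Local Open Scope R_scope.

Definition vec (d : nat) := 'I_d -> R.
Definition vadd d (x y : vec d) : vec d := fun i => x i + y i.
Definition vsub d (x y : vec d) : vec d := fun i => x i - y i.
Definition vopp d (x : vec d) : vec d := fun i => - x i.
Definition vscale d (a : R) (x : vec d) : vec d := fun i => a * x i.
Definition dot d (x y : vec d) : R := \big[Rplus/0]_(i < d) (x i * y i).
Definition vnorm d (x : vec d) : R := sqrt (dot x x).

Definition convex_set d (Om : vec d -> Prop) : Prop :=
  forall x y l, Om x -> Om y -> 0 <= l <= 1 -> Om (vadd x (vscale l (vsub y x))).
Definition closed_set d (Om : vec d -> Prop) : Prop :=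
  forall x, (forall eps, 0 < eps -> exists y, Om y /\ vnorm (vsub x y) < eps) -> Om x.
Definition bounded_set d (Om : vec d -> Prop) : Prop :=
  exists M, forall x, Om x -> vnorm x <= M.
(* compactness in R^d (Heine--Borel) *)
Definition compact_set d (Om : vec d -> Prop) : Prop :=
  closed_set Om /\ bounded_set Om.
Definition nonempty_set d (Om : vec d -> Prop) : Prop := exists x, Om x.
Definition has_diameter d (Om : vec d -> Prop) (D : R) : Prop :=
  forall x y, Om x -> Om y -> vnorm (vsub x y) <= D.

Definition has_gradient d (f : vec d -> R) (g : vec d -> vec d) : Prop :=
  forall x eps, 0 < eps -> exists delta, 0 < delta /\
    forall y, vnorm (vsub y x) < delta ->
      Rabs (f y - f x - dot (g x) (vsub y x)) <= eps * vnorm (vsub y x).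

Definition L_smooth d (Om : vec d -> Prop) (g : vec d -> vec d) (L : R) : Prop :=
  forall x y, Om x -> Om y -> vnorm (vsub (g x) (g y)) <= L * vnorm (vsub x y).

Definition Favg d n (f : 'I_n -> vec d -> R) (x : vec d) : R :=
  / INR n * \big[Rplus/0]_(i < n) f i x.
Definition gradF d n (grad : 'I_n -> vec d -> vec d) (x : vec d) : vec d :=
  fun j => / INR n * \big[Rplus/0]_(i < n) grad i x j.

Definition FW_gap d (Om : vec d -> Prop) (gF : vec d -> vec d) (x : vec d) : R :=
  epsilon (inhabits 0)
    (fun r => is_lub (fun z => exists v, Om v /\ z = dot (vsub v x) (vopp (gF x))) r).

Definition is_lmo d (Om : vec d -> Prop) (lmo : vec d -> vec d) : Prop :=
  forall g, Om (lmo g) /\ forall v, Om v -> dot v (vopp g) <= dot (lmo g) (vopp g).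

(* Inner loop of one epoch: xtil is the snapshot, gtil = grad F(xtil),
   I t is the multiset (list) of sampled indices at inner step t (b_t = size (I t)).
   inner_iter ... t = x^{s+1}_t. *)
Fixpoint inner_iter d n (grad : 'I_n -> vec d -> vec d) (lmo : vec d -> vec d)
    (gamma : nat -> R) (xtil gtil : vec d) (I : nat -> seq 'I_n) (t : nat) : vec d :=
  match t with
  | O => xtil
  | S t' =>
      let x := inner_iter grad lmo gamma xtil gtil I t' in
      let est : vec d := fun j =>
        / INR (size (I t')) * \big[Rplus/0]_(i <- I t') (grad i x j - grad i xtil j)
        + gtil j in
      vadd x (vscale (gamma t') (vsub (lmo est) x))
  end.

(* snapshots: snapshot 0 = x0 (= x^0_m), snapshot (s+1) = x^{s+1}_m;
   w s t is the sample drawn at inner step t of epoch s *)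
Fixpoint snapshot d n (grad : 'I_n -> vec d -> vec d) (lmo : vec d -> vec d)
    (gamma : nat -> R) (m : nat) (x0 : vec d) (w : nat -> nat -> seq 'I_n) (s : nat)
    : vec d :=
  match s with
  | O => x0
  | S s' =>
      let xt := snapshot grad lmo gamma m x0 w s' in
      inner_iter grad lmo gamma xt (gradF grad xt) (w s') m
  end.

Definition svfw_iter d n (grad : 'I_n -> vec d -> vec d) (lmo : vec d -> vec d)
    (gamma : nat -> R) (m : nat) (x0 : vec d) (w : nat -> nat -> seq 'I_n)
    (s t : nat) : vec d :=
  let xt := snapshot grad lmo gamma m x0 w s in
  inner_iter grad lmo gamma xt (gradF grad xt) (w s) t.

(* Sample space of all draws: for each epoch s < S and inner step t < m,
   a b-tuple of indices drawn uniformly with replacement (independently). *)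
Definition samples (S m b n : nat) : finType := {ffun 'I_S * 'I_m -> b.-tuple 'I_n}.

Definition sample_path (S m b n : nat) (w : samples S m b n) : nat -> nat -> seq 'I_n :=
  fun s t =>
    match (insub s : option 'I_S), (insub t : option 'I_m) with
    | Some s', Some t' => tval (w (s', t'))
    | _, _ => [::]
    end.

(* E[ G(x_a) ]: expectation over the uniform sample space and over the uniformly
   chosen output index (s, t) in {0..S-1} x {0..m-1}. *)
Definition expected_gap d n (Om : vec d -> Prop) (grad : 'I_n -> vec d -> vec d)
    (lmo : vec d -> vec d) (gamma : nat -> R) (m S b : nat) (x0 : vec d) : R :=
  / INR #|samples S m b n| *
  \big[Rplus/0]_(w : samples S m b n)
     (/ INR (m * S) *
      \big[Rplus/0]_(s < S) \big[Rplus/0]_(t < m)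
         FW_gap Om (gradF grad)
           (svfw_iter grad lmo gamma m x0 (sample_path w) s t)).

(* Each inner step of SVFW is an inexact Frank-Wolfe step: L-smoothness and the
   optimality of the oracle output give
     gamma G(x_t) <= F(x_t) - F(x_(t+1)) + 3/2 L gamma^2 D^2 + |g_t - grad F(x_t)|^2 / (2L),
   where g_t is the variance-reduced estimate, and summing over the T steps
   telescopes to F(x_0) - F(xstar).  The minibatch of step t is a fresh uniform
   sample, independent of x_t, so E |g_t - grad F(x_t)|^2 <= L^2 |x_t - x~|^2 / b
   <= L^2 (t gamma D)^2 / m^2 <= L^2 gamma^2 D^2.  Hence
   T gamma E[G(x_a)] <= F(x_0) - F(xstar) + 2 T L gamma^2 D^2, and the chosen gamma
   balances the two terms.  If F(x_0) = F(xstar) then gamma = 0, every iterate is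
   the minimiser x_0, and its gap is nonpositive. *)

From Stdlib Require Import Reals Lra ClassicalEpsilon FunctionalExtensionality.
From HB Require Import structures.
From mathcomp Require Import all_boot.
Set Implicit Arguments. Unset Strict Implicit. Unset Printing Implicit Defensive.
Local Open Scope R_scope.

HB.instance Definition _ := Monoid.isComLaw.Build R 0 Rplus
  (fun x y z => esym (Rplus_assoc x y z)) Rplus_comm Rplus_0_l.

Section RealSums.
Variables (I : Type) (r : seq I) (P : pred I).
Implicit Types F G : I -> R.

Lemma mulR_sumr a F :
  a * \big[Rplus/0]_(i <- r | P i) F i = \big[Rplus/0]_(i <- r | P i) (a * F i).
Proof. by apply: (big_endo (fun x => a * x)) => [x y|]; lra. Qed.

Lemma leR_sum F G :
  (forall i, P i -> F i <= G i) ->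
  \big[Rplus/0]_(i <- r | P i) F i <= \big[Rplus/0]_(i <- r | P i) G i.
Proof. by move=> H; apply: (big_ind2 (fun x y => x <= y)) => // *; lra. Qed.

Lemma sumR_ge0 F :
  (forall i, P i -> 0 <= F i) -> 0 <= \big[Rplus/0]_(i <- r | P i) F i.
Proof. by move=> H; apply: (big_ind (fun x => 0 <= x)) => // *; lra. Qed.

Lemma sumR_le0 F :
  (forall i, P i -> F i <= 0) -> \big[Rplus/0]_(i <- r | P i) F i <= 0.
Proof. by move=> H; apply: (big_ind (fun x => x <= 0)) => // *; lra. Qed.

Lemma sumRN F :
  - (\big[Rplus/0]_(i <- r | P i) F i) = \big[Rplus/0]_(i <- r | P i) - F i.
Proof. by apply: (big_endo (fun x => - x)) => [x y|]; lra. Qed.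

Lemma sumRB F G :
  \big[Rplus/0]_(i <- r | P i) (F i - G i) =
  \big[Rplus/0]_(i <- r | P i) F i - \big[Rplus/0]_(i <- r | P i) G i.
Proof. by rewrite /Rminus big_split /= sumRN. Qed.

End RealSums.

Lemma sumR_const (I : finType) (c : R) : \big[Rplus/0]_(i : I) c = INR #|I| * c.
Proof.
rewrite big_const; elim: #|I| => [|k IH]; first by rewrite /=; lra.
by rewrite iterS IH S_INR; lra.
Qed.

Lemma sumR_const_seq (I : Type) (r : seq I) (c : R) :
  \big[Rplus/0]_(i <- r) c = INR (size r) * c.
Proof.
elim: r => [|x r IH]; first by rewrite big_nil /=; lra.
by rewrite big_cons IH (_ : size (x :: r) = (size r).+1) // S_INR; lra.
Qed.

Lemma telescope_sumR (a : nat -> R) k :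
  \big[Rplus/0]_(i < k) (a i - a i.+1) = a 0%N - a k.
Proof. by elim: k => [|k IH]; rewrite ?big_ord0 ?big_ord_recr /= ?IH; lra. Qed.

Section Vectors.
Variable d : nat.
Implicit Types x y z : vec d.

Lemma vec_ext x y : (forall i, x i = y i) -> x = y.
Proof. exact: functional_extensionality. Qed.

Lemma dotC x y : dot x y = dot y x.
Proof. by rewrite /dot; apply: eq_bigr => i _; lra. Qed.

Lemma dotDl x y z : dot (vadd x y) z = dot x z + dot y z.
Proof. by rewrite /dot -big_split; apply: eq_bigr => i _; rewrite /vadd /=; lra. Qed.

Lemma dotDr x y z : dot z (vadd x y) = dot z x + dot z y.
Proof. by rewrite dotC dotDl !(dotC z). Qed.

Lemma dotBl x y z : dot (vsub x y) z = dot x z - dot y z.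
Proof. by rewrite /dot -sumRB; apply: eq_bigr => i _; rewrite /vsub; lra. Qed.

Lemma dotBr x y z : dot z (vsub x y) = dot z x - dot z y.
Proof. by rewrite dotC dotBl !(dotC z). Qed.

Lemma dotZl a x y : dot (vscale a x) y = a * dot x y.
Proof. by rewrite /dot mulR_sumr; apply: eq_bigr => i _; rewrite /vscale; lra. Qed.

Lemma dotZr a x y : dot y (vscale a x) = a * dot y x.
Proof. by rewrite dotC dotZl dotC. Qed.

Lemma dotNr x y : dot y (vopp x) = - dot y x.
Proof. by rewrite /dot sumRN; apply: eq_bigr => i _; rewrite /vopp; lra. Qed.

Lemma dot_ge0 x : 0 <= dot x x.
Proof. by apply: sumR_ge0 => i _; nra. Qed.

Lemma dot_eq0 x : dot x x = 0 -> forall i, x i = 0.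
Proof.
move=> x0 i; have : x i * x i <= dot x x.
  rewrite /dot (bigD1 i) //=.
  set rest := (X in _ <= _ + X).
  have : 0 <= rest by apply: sumR_ge0 => j _; nra.
  lra.
by rewrite x0; nra.
Qed.

Lemma vnorm_ge0 x : 0 <= vnorm x.
Proof. exact: sqrt_pos. Qed.

Lemma vnorm_sqr x : vnorm x * vnorm x = dot x x.
Proof. by rewrite /vnorm sqrt_sqrt //; apply: dot_ge0. Qed.

Lemma vnorm_eq0_dot x y : vnorm x = 0 -> dot x y = 0.
Proof.
move=> nx0; have x0 : dot x x = 0 by rewrite -vnorm_sqr nx0; lra.
by rewrite /dot big1 // => i _; rewrite (dot_eq0 x0 i); lra.
Qed.

Lemma cauchy_schwarz x y : dot x y <= vnorm x * vnorm y.
Proof.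
have nx := vnorm_ge0 x; have ny := vnorm_ge0 y.
have [nx0|nx0] := Req_dec (vnorm x) 0; first by rewrite (vnorm_eq0_dot y nx0); nra.
have [ny0|ny0] := Req_dec (vnorm y) 0; first by rewrite dotC (vnorm_eq0_dot x ny0); nra.
have := dot_ge0 (vsub (vscale (vnorm y) x) (vscale (vnorm x) y)).
rewrite !dotBl !dotBr !dotZl !dotZr (dotC y x) -!vnorm_sqr => h.
have : 0 < vnorm x * vnorm y by apply: Rmult_lt_0_compat; lra.
nra.
Qed.

Lemma vnorm_triangle x y : vnorm (vadd x y) <= vnorm x + vnorm y.
Proof.
have nx := vnorm_ge0 x; have ny := vnorm_ge0 y; have nxy := vnorm_ge0 (vadd x y).
have : vnorm (vadd x y) * vnorm (vadd x y) <= (vnorm x + vnorm y) * (vnorm x + vnorm y).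
  rewrite vnorm_sqr dotDl !dotDr (dotC y x) -!vnorm_sqr.
  by have := cauchy_schwarz x y; nra.
nra.
Qed.

Lemma vnormZ a x : vnorm (vscale a x) = Rabs a * vnorm x.
Proof.
rewrite /vnorm dotZl dotZr -Rmult_assoc sqrt_mult; first by rewrite sqrt_Rsqr_abs.
- by nra.
- exact: dot_ge0.
Qed.

End Vectors.

Lemma FW_gap_lmo d (Om : vec d -> Prop) lmo (gF : vec d -> vec d) x :
  is_lmo Om lmo -> FW_gap Om gF x = dot (vsub (lmo (gF x)) x) (vopp (gF x)).
Proof.
move=> hlmo; rewrite /FW_gap.
set E := fun z => exists v, Om v /\ z = dot (vsub v x) (vopp (gF x)).
have lubE : is_lub E (dot (vsub (lmo (gF x)) x) (vopp (gF x))).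
  split=> [z [v [Omv ->]]|z ubz].
    by rewrite !dotBl; have := (hlmo (gF x)).2 v Omv; lra.
  by apply: ubz; exists (lmo (gF x)); split=> //; exact: (hlmo _).1.
exact: is_lub_u (epsilon_spec (inhabits 0) (fun r => is_lub E r) (ex_intro _ _ lubE)) lubE.
Qed.

Lemma has_gradient_line d (f : vec d -> R) g x h c :
  has_gradient f g ->
  derivable_pt_lim (fun r => f (vadd x (vscale r h))) c (dot (g (vadd x (vscale c h))) h).
Proof.
move=> gradf eps eps_gt0.
set z := vadd x (vscale c h); set N := vnorm h; have N_ge0 : 0 <= N := vnorm_ge0 h.
have eps'_gt0 : 0 < eps / (2 * (N + 1)) by apply: Rdiv_lt_0_compat; lra.
have [del [del_gt0 Hdel]] := gradf z _ eps'_gt0.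
have del'_gt0 : 0 < del / (N + 1) by apply: Rdiv_lt_0_compat; lra.
exists (mkposreal _ del'_gt0) => r r_neq0 /= r_lt.
have zr : vsub (vadd x (vscale (c + r) h)) z = vscale r h.
  by apply: vec_ext => i; rewrite /vsub /vadd /vscale /z /vadd /vscale; lra.
have r_gt0 : 0 < Rabs r by apply: Rabs_pos_lt.
have rN_lt : Rabs r * (N + 1) < del.
  have := Rmult_lt_compat_r (N + 1) _ _ ltac:(lra) r_lt.
  by rewrite /Rdiv Rmult_assoc Rinv_l; lra.
have := Hdel (vadd x (vscale (c + r) h)).
rewrite zr vnormZ dotZr -/N => /(_ ltac:(nra)).
set A := f _ - f z - _ => HA.
have -> : (f (vadd x (vscale (c + r) h)) - f z) / r - dot (g z) h = A / r.
  by rewrite /A; field.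
rewrite /Rdiv Rabs_mult Rabs_inv.
apply: (Rmult_lt_reg_r (Rabs r)) => //; rewrite Rmult_assoc Rinv_l ?Rmult_1_r; last lra.
apply: Rle_lt_trans HA _.
have -> : eps / (2 * (N + 1)) * (Rabs r * N) = eps * Rabs r * (N / (2 * (N + 1))).
  by field; lra.
have : N / (2 * (N + 1)) < 1.
  by apply: (Rmult_lt_reg_r (2 * (N + 1))); rewrite /Rdiv ?Rmult_assoc ?Rinv_l; lra.
have : 0 < eps * Rabs r by nra.
nra.
Qed.

(* The constant [L] (rather than [L/2]) comes from the mean value theorem:
   we never integrate the gradient along the segment. *)
Lemma L_smooth_descent d (Om : vec d -> Prop) (f : vec d -> R) g L x v s :
  convex_set Om -> has_gradient f g -> L_smooth Om g L -> 0 <= L ->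
  Om x -> Om v -> 0 <= s <= 1 ->
  f (vadd x (vscale s (vsub v x))) <=
  f x + s * dot (g x) (vsub v x) + L * (s * s) * dot (vsub v x) (vsub v x).
Proof.
move=> convOm gradf smooth L_ge0 Omx Omv s01.
set h := vsub v x; have hh_ge0 := dot_ge0 h.
have x0h : vadd x (vscale 0 h) = x by apply: vec_ext => i; rewrite /vadd /vscale; lra.
have [->|s_neq0] := Req_dec s 0; first by rewrite x0h; nra.
have [c [Hc c_in]] := MVT_cor2 (fun r => f (vadd x (vscale r h)))
  (fun r => dot (g (vadd x (vscale r h))) h) 0 s ltac:(lra)
  (fun c _ => has_gradient_line x h c gradf).
rewrite /= x0h in Hc.
have Omc : Om (vadd x (vscale c h)) by apply: convOm => //; lra.
have := smooth _ _ Omc Omx.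
have -> : vsub (vadd x (vscale c h)) x = vscale c h.
  by apply: vec_ext => i; rewrite /vsub /vadd /vscale; lra.
rewrite vnormZ Rabs_right; last lra.
have := cauchy_schwarz (vsub (g (vadd x (vscale c h))) (g x)) h.
rewrite dotBl; have := vnorm_ge0 h; have := vnorm_sqr h.
set N := vnorm (vsub _ _); move=> hN h_ge0 CS smooth_c.
have gc_le : dot (g (vadd x (vscale c h))) h <= dot (g x) h + L * c * dot h h.
  rewrite -hN; have : N * vnorm h <= L * c * vnorm h * vnorm h by nra.
  lra.
have : L * c * dot h h <= L * s * dot h h.
  by apply: Rmult_le_compat_r => //; apply: Rmult_le_compat_l; lra.
nra.
Qed.

Lemma dot_gradF d n (grad : 'I_n -> vec d -> vec d) x h :
  dot (gradF grad x) h = / INR n * \big[Rplus/0]_(i < n) dot (grad i x) h.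
Proof.
rewrite /dot /gradF [in RHS]exchange_big [RHS]mulR_sumr /=; apply: eq_bigr => j _.
rewrite Rmult_assoc; congr (_ * _).
by rewrite Rmult_comm mulR_sumr; apply: eq_bigr => i _; ring.
Qed.

Lemma Favg_descent d n (Om : vec d -> Prop) (f : 'I_n -> vec d -> R) grad L x v s :
  (0 < n)%N -> convex_set Om -> (forall i, has_gradient (f i) (grad i)) ->
  (forall i, L_smooth Om (grad i) L) -> 0 <= L ->
  Om x -> Om v -> 0 <= s <= 1 ->
  Favg f (vadd x (vscale s (vsub v x))) <=
  Favg f x + s * dot (gradF grad x) (vsub v x) + L * (s * s) * dot (vsub v x) (vsub v x).
Proof.
move=> n_gt0 convOm gradf smooth L_ge0 Omx Omv s01.
have n_pos : 0 < INR n by apply: lt_0_INR; apply/ltP.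
rewrite /Favg dot_gradF.
set C := L * (s * s) * _.
have -> : C = / INR n * \big[Rplus/0]_(i < n) C by rewrite sumR_const card_ord; field; lra.
have sum_le : \big[Rplus/0]_(i < n) f i (vadd x (vscale s (vsub v x))) <=
    \big[Rplus/0]_(i < n) f i x + s * \big[Rplus/0]_(i < n) dot (grad i x) (vsub v x)
    + \big[Rplus/0]_(i < n) C.
  rewrite mulR_sumr -!big_split /=; apply: leR_sum => i _.
  exact: L_smooth_descent (gradf i) (smooth i) L_ge0 Omx Omv s01.
have := Rmult_le_compat_l (/ INR n) _ _ (Rlt_le _ _ (Rinv_0_lt_compat _ n_pos)) sum_le.
lra.
Qed.

(* Otherwise a short step towards [lmo (gradF x)] would decrease [Favg]. *)
Lemma FW_gap_le0_at_min d n (Om : vec d -> Prop) (f : 'I_n -> vec d -> R) grad L lmo x :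
  (0 < n)%N -> convex_set Om -> (forall i, has_gradient (f i) (grad i)) ->
  (forall i, L_smooth Om (grad i) L) -> 0 <= L -> is_lmo Om lmo -> Om x ->
  (forall y, Om y -> Favg f x <= Favg f y) ->
  FW_gap Om (gradF grad) x <= 0.
Proof.
move=> n_gt0 convOm gradf smooth L_ge0 hlmo Omx xmin.
rewrite (FW_gap_lmo _ _ hlmo); set u := lmo _; have Omu : Om u := (hlmo _).1.
rewrite dotNr dotC; set G := - _; set q := dot (vsub u x) (vsub u x).
have q_ge0 : 0 <= q := dot_ge0 _.
have [//|G_gt0] := Rle_lt_dec G 0.
set s := G / (2 * L * q + G).
have den_gt0 : 0 < 2 * L * q + G by nra.
have s_gt0 : 0 < s by apply: Rdiv_lt_0_compat.
have sG : s * (2 * L * q + G) = G by rewrite /s; field; lra.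
have s_le1 : s <= 1 by nra.
have s01 : 0 <= s <= 1 by lra.
have := Favg_descent n_gt0 convOm gradf smooth L_ge0 Omx Omu s01.
have := xmin _ (convOm _ _ _ Omx Omu s01).
rewrite -/q => descent_ge descent_le.
have : s * G <= s * (L * s * q) by rewrite /G; lra.
move/(Rmult_le_reg_l _ _ _ s_gt0) => G_le.
have : 0 < s * G by nra.
lra.
Qed.

Definition vr_grad d n (grad : 'I_n -> vec d -> vec d) (xtil gtil : vec d)
    (It : seq 'I_n) (x : vec d) : vec d :=
  fun j => / INR (size It) * \big[Rplus/0]_(i <- It) (grad i x j - grad i xtil j) + gtil j.

Definition vr_sqerr d n (grad : 'I_n -> vec d -> vec d) (xtil gtil : vec d)
    (It : seq 'I_n) (x : vec d) : R :=
  let e := vsub (vr_grad grad xtil gtil It x) (gradF grad x) in dot e e.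

Section InnerLoop.
Variables (d n : nat) (grad : 'I_n -> vec d -> vec d) (lmo : vec d -> vec d).

Lemma inner_iterS gamma xtil gtil I t :
  inner_iter grad lmo gamma xtil gtil I t.+1 =
  let x := inner_iter grad lmo gamma xtil gtil I t in
  vadd x (vscale (gamma t) (vsub (lmo (vr_grad grad xtil gtil (I t) x)) x)).
Proof. by []. Qed.

Lemma inner_iter_ext gamma xtil gtil (I1 I2 : nat -> seq 'I_n) t :
  (forall t', (t' < t)%N -> I1 t' = I2 t') ->
  inner_iter grad lmo gamma xtil gtil I1 t = inner_iter grad lmo gamma xtil gtil I2 t.
Proof.
elim: t => [|t IH] eqI //=; rewrite IH ?eqI // => t' lt_t't.
by apply: eqI; apply: ltn_trans lt_t't _.
Qed.

Lemma snapshot_ext gamma m x0 (P1 P2 : nat -> nat -> seq 'I_n) s :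
  (forall s' t', (s' < s)%N -> P1 s' t' = P2 s' t') ->
  snapshot grad lmo gamma m x0 P1 s = snapshot grad lmo gamma m x0 P2 s.
Proof.
elim: s => [|s IH] eqP12 //=; rewrite IH => [|s' t' lt_s's]; last first.
  by apply: eqP12; apply: ltn_trans lt_s's _.
by apply: inner_iter_ext => t' _; apply: eqP12.
Qed.

Lemma inner_iter_step0 xtil gtil I t :
  inner_iter grad lmo (fun _ => 0) xtil gtil I t = xtil.
Proof.
by elim: t => [|t IH] //=; rewrite IH; apply: vec_ext => i; rewrite /vadd /vscale /=; lra.
Qed.

Lemma snapshot_step0 m x0 P s : snapshot grad lmo (fun _ => 0) m x0 P s = x0.
Proof. by elim: s => [|s IH] //=; rewrite inner_iter_step0. Qed.

Variables (Om : vec d -> Prop) (D gam : R).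
Hypothesis convOm : convex_set Om.
Hypothesis diamOm : has_diameter Om D.
Hypothesis lmoOm : is_lmo Om lmo.
Hypothesis gam01 : 0 <= gam <= 1.
Notation iter := (inner_iter grad lmo (fun _ => gam)).

Lemma inner_iter_in xtil gtil I t : Om xtil -> Om (iter xtil gtil I t).
Proof.
by move=> Omx; elim: t => [|t IH] //=; apply: convOm => //; apply: (lmoOm _).1.
Qed.

Lemma inner_iter_dist xtil gtil I t : Om xtil ->
  vnorm (vsub (iter xtil gtil I t) xtil) <= INR t * gam * D.
Proof.
move=> Omx; elim: t => [|t IH].
  have -> : vsub xtil xtil = vscale 0 xtil.
    by apply: vec_ext => i; rewrite /vsub /vscale; lra.
  by rewrite vnormZ Rabs_R0 /=; lra.
rewrite inner_iterS S_INR /=; set x := iter _ _ _ t; set v := lmo _.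
have -> : vsub (vadd x (vscale gam (vsub v x))) xtil =
          vadd (vsub x xtil) (vscale gam (vsub v x)).
  by apply: vec_ext => i; rewrite /vsub /vadd /vscale; lra.
apply: Rle_trans (vnorm_triangle _ _) _.
rewrite vnormZ Rabs_right; last lra.
have Omv : Om v := (lmoOm _).1.
have := diamOm Omv (inner_iter_in gtil I t Omx); rewrite -/x in IH *.
by have := vnorm_ge0 (vsub v x); nra.
Qed.

Lemma snapshot_in m x0 (P : nat -> nat -> seq 'I_n) s : Om x0 ->
  Om (snapshot grad lmo (fun _ => gam) m x0 P s).
Proof. by move=> Omx0; elim: s => [|s IH] //=; apply: inner_iter_in. Qed.

Variables (f : 'I_n -> vec d -> R) (L : R).
Hypothesis n_gt0 : (0 < n)%N.
Hypothesis gradf : forall i, has_gradient (f i) (grad i).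
Hypothesis smooth : forall i, L_smooth Om (grad i) L.

Lemma inner_step_gap_le xtil gtil I t : 0 <= L -> Om xtil ->
  let x := iter xtil gtil I t in
  gam * FW_gap Om (gradF grad) x <=
  Favg f x - Favg f (iter xtil gtil I t.+1) + L * (gam * gam) * (D * D)
  + gam * D * vnorm (vsub (vr_grad grad xtil gtil (I t) x) (gradF grad x)).
Proof.
move=> L_ge0 Omxtil x; rewrite inner_iterS /= -/x.
set e := vr_grad _ _ _ _ _; set v := lmo e; set gF := gradF grad x; set u := lmo gF.
have Omx : Om x := inner_iter_in gtil I t Omxtil.
have Omv : Om v := (lmoOm _).1; have Omu : Om u := (lmoOm _).1.
have := Favg_descent n_gt0 convOm gradf smooth L_ge0 Omx Omv gam01.
rewrite (FW_gap_lmo _ _ lmoOm) -/gF -/u.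
have vx_le : dot (vsub v x) (vsub v x) <= D * D.
  by rewrite -vnorm_sqr; have := diamOm Omv Omx; have := vnorm_ge0 (vsub v x); nra.
(* [v] is optimal for the estimate [e] and [u] for the true gradient [gF];
   exchanging them costs at most [D * |e - gF|]. *)
have lmo_v := (lmoOm e).2 u Omu; rewrite -/v in lmo_v.
have uv_le : dot (vsub u v) (vsub e gF) <= D * vnorm (vsub e gF).
  apply: Rle_trans (cauchy_schwarz _ _) _; apply: Rmult_le_compat_r; first exact: vnorm_ge0.
  exact: diamOm.
move: lmo_v uv_le vx_le; rewrite ?dotNr ?dotBl ?dotBr (dotC gF v) (dotC gF x).
move=> lmo_v uv_le vx_le descent.
have key : dot v gF - dot x gF <= dot u gF - dot x gF + D * vnorm (vsub e gF) by lra.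
have := Rmult_le_compat_l _ _ _ (proj1 gam01) key.
have : L * (gam * gam) * (dot v v - dot v x - (dot x v - dot x x)) <= L * (gam * gam) * (D * D).
  by apply: Rmult_le_compat_l => //; apply: Rmult_le_pos => //; nra.
nra.
Qed.

Lemma inner_step_bound xtil gtil I t : 0 < L -> Om xtil ->
  let x := iter xtil gtil I t in
  gam * FW_gap Om (gradF grad) x <=
  Favg f x - Favg f (iter xtil gtil I t.+1) + 3 / 2 * L * (gam * gam) * (D * D)
  + / (2 * L) * vr_sqerr grad xtil gtil (I t) x.
Proof.
move=> L_gt0 Omxtil x; have := inner_step_gap_le gtil I t (Rlt_le _ _ L_gt0) Omxtil.
rewrite /vr_sqerr -/x -vnorm_sqr; set V := vnorm _ => gap_le.
have amgm : gam * D * V <= L * (gam * gam) * (D * D) / 2 + / (2 * L) * (V * V).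
  apply: (Rmult_le_reg_l (2 * L)); first lra.
  have -> : 2 * L * (L * (gam * gam) * (D * D) / 2 + / (2 * L) * (V * V)) =
            L * L * (gam * gam) * (D * D) + V * V by field; lra.
  by have := Rle_0_sqr (L * gam * D - V); rewrite /Rsqr; nra.
lra.
Qed.

End InnerLoop.

Lemma sum_tupleS (T : finType) b (F : b.+1.-tuple T -> R) :
  \big[Rplus/0]_(k : b.+1.-tuple T) F k =
  \big[Rplus/0]_(i : T) \big[Rplus/0]_(k : b.-tuple T) F [tuple of i :: k].
Proof.
rewrite pair_big /= (reindex (fun p : T * b.-tuple T => [tuple of p.1 :: p.2])) //=.
exists (fun k : b.+1.-tuple T => (thead k, [tuple of behead k])).
- by move=> [i k] _ /=; rewrite theadE; congr (_, _); apply: val_inj.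
- by move=> k _ /=; rewrite -tuple_eta.
Qed.

Section Minibatch.
Variables (n : nat) (c : 'I_n -> R).
Hypothesis c_centered : \big[Rplus/0]_(i < n) c i = 0.

Lemma sum_tuple_centered b :
  \big[Rplus/0]_(k : b.-tuple 'I_n) \big[Rplus/0]_(i <- k) c i = 0.
Proof.
elim: b => [|b IH].
  by apply: big1 => k _; rewrite tuple0 big_nil.
rewrite sum_tupleS.
under eq_bigr => i _ do under eq_bigr => k _ do rewrite /= big_cons.
under eq_bigr => i _ do rewrite big_split /= IH sumR_const.
by rewrite big_split /= -mulR_sumr c_centered sumR_const; ring.
Qed.

(* The cross terms vanish since [c] is centred: the variance of a sum of [b]
   independent uniform draws is [b] times the variance of one draw. *)
Lemma sum_tuple_sqr_centered b :
  \big[Rplus/0]_(k : b.-tuple 'I_n)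
     (\big[Rplus/0]_(i <- k) c i * \big[Rplus/0]_(i <- k) c i) * INR n
  = INR b * INR #|{: b.-tuple 'I_n}| * \big[Rplus/0]_(i < n) (c i * c i).
Proof.
elim: b => [|b IH].
  by rewrite big1 /=; [ring | move=> k _; rewrite tuple0 big_nil; ring].
set K := INR #|{: b.-tuple 'I_n}| in IH *.
set Q := \big[Rplus/0]_(k : b.-tuple 'I_n) _ in IH.
have cardS : INR #|{: b.+1.-tuple 'I_n}| = INR n * K.
  by rewrite /K !card_tuple card_ord expnS mult_INR.
have sum_cons i : \big[Rplus/0]_(k : b.-tuple 'I_n)
    (\big[Rplus/0]_(j <- [tuple of i :: k]) c j * \big[Rplus/0]_(j <- [tuple of i :: k]) c j)
    = K * (c i * c i) + Q.
  have cons_sqr (k : b.-tuple 'I_n) :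
      \big[Rplus/0]_(j <- [tuple of i :: k]) c j * \big[Rplus/0]_(j <- [tuple of i :: k]) c j =
      c i * c i + 2 * c i * \big[Rplus/0]_(j <- k) c j
      + \big[Rplus/0]_(j <- k) c j * \big[Rplus/0]_(j <- k) c j.
    by rewrite /= big_cons; ring.
  rewrite (eq_bigr _ (fun k _ => cons_sqr k)) !big_split /= sumR_const -/K.
  by rewrite -mulR_sumr sum_tuple_centered -/Q; ring.
rewrite S_INR cardS (sum_tupleS (b := b)) (eq_bigr _ (fun i _ => sum_cons i)).
rewrite big_split /= -mulR_sumr sumR_const card_ord.
have -> : (K * \big[Rplus/0]_(i < n) (c i * c i) + INR n * Q) * INR n =
          K * \big[Rplus/0]_(i < n) (c i * c i) * INR n + INR n * (Q * INR n) by ring.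
by rewrite IH; set C := \big[Rplus/0]_(i < n) (c i * c i); ring.
Qed.

End Minibatch.

Lemma minibatch_variance_le n (a : 'I_n -> R) b : (0 < n)%N -> (0 < b)%N ->
  \big[Rplus/0]_(k : b.-tuple 'I_n)
     ((/ INR b * \big[Rplus/0]_(i <- k) a i - / INR n * \big[Rplus/0]_(i < n) a i) *
      (/ INR b * \big[Rplus/0]_(i <- k) a i - / INR n * \big[Rplus/0]_(i < n) a i))
  <= INR #|{: b.-tuple 'I_n}| / (INR b * INR n) * \big[Rplus/0]_(i < n) (a i * a i).
Proof.
move=> n_gt0 b_gt0.
have n_pos : 0 < INR n by apply: lt_0_INR; apply/ltP.
have b_pos : 0 < INR b by apply: lt_0_INR; apply/ltP.
set A := \big[Rplus/0]_(i < n) a i; set mean := / INR n * A.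
pose c i := a i - mean.
have c_centered : \big[Rplus/0]_(i < n) c i = 0.
  by rewrite /c sumRB sumR_const card_ord /mean -/A; field; lra.
have dev_eq (k : b.-tuple 'I_n) :
    / INR b * \big[Rplus/0]_(i <- k) a i - mean = / INR b * \big[Rplus/0]_(i <- k) c i.
  by rewrite /c sumRB sumR_const_seq size_tuple; field; lra.
rewrite (eq_bigr _ (fun k _ => f_equal2 Rmult (dev_eq k) (dev_eq k))).
have := sum_tuple_sqr_centered c_centered b.
set K := INR #|{: b.-tuple 'I_n}|; set C := \big[Rplus/0]_(i < n) (c i * c i).
set Q := \big[Rplus/0]_k _ => sqr_eq.
have -> : \big[Rplus/0]_(k : b.-tuple 'I_n)
    (/ INR b * \big[Rplus/0]_(i <- k) c i * (/ INR b * \big[Rplus/0]_(i <- k) c i))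
    = / INR b * / INR b * Q.
  by rewrite /Q mulR_sumr; apply: eq_bigr => k _; ring.
have -> : / INR b * / INR b * Q = K / (INR b * INR n) * C.
  by apply: (Rmult_eq_reg_r (INR n)); [rewrite Rmult_assoc sqr_eq; field | ]; lra.
have C_le : C <= \big[Rplus/0]_(i < n) (a i * a i).
  have -> : C = \big[Rplus/0]_(i < n) (a i * a i) - mean * A.
    rewrite /C /c; have -> : \big[Rplus/0]_(i < n) ((a i - mean) * (a i - mean)) =
      \big[Rplus/0]_(i < n) (a i * a i) - mean * A - mean * \big[Rplus/0]_(i < n) c i.
      by rewrite /A !mulR_sumr -!sumRB; apply: eq_bigr => i _; rewrite /c; ring.
    by rewrite c_centered; ring.
  have : 0 <= mean * A by rewrite /mean; have := Rinv_0_lt_compat _ n_pos; nra.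
  lra.
apply: Rmult_le_compat_l C_le; apply: Rmult_le_pos; first exact: pos_INR.
by left; apply: Rinv_0_lt_compat; nra.
Qed.

Definition fupd (A B : finType) (w : {ffun A -> B}) (a : A) (k : B) : {ffun A -> B} :=
  [ffun p => if p == a then k else w p].

Section FreshCoordinate.
Variables (A B : finType) (a : A) (H : {ffun A -> B} -> B -> R).
Hypothesis H_fupd : forall w k k', H (fupd w a k') k = H w k.

Lemma sum_ffun_coord_swap j k :
  \big[Rplus/0]_(w : {ffun A -> B} | w a == j) H w k =
  \big[Rplus/0]_(w : {ffun A -> B} | w a == k) H w k.
Proof.
pose sw (y : B) := if y == j then k else if y == k then j else y.
have swK : involutive sw.
  move=> y; rewrite /sw; case: (eqVneq y j) => [->|neq_yj].
    by rewrite eqxx; case: (eqVneq k j).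
  case: (eqVneq y k) => [->|neq_yk]; last by rewrite (negbTE neq_yj) (negbTE neq_yk).
  by rewrite eqxx; case: (eqVneq k j) => [->|]; rewrite ?eqxx.
pose tau (w : {ffun A -> B}) := fupd w a (sw (w a)).
have tauK : involutive tau.
  by move=> w; apply/ffunP => p; rewrite /tau /fupd !ffunE; case: eqP => [->|]; rewrite ?eqxx ?swK.
rewrite [RHS](reindex_inj (can_inj tauK)) /=.
apply: eq_big => [w|w _]; last by rewrite /tau H_fupd.
rewrite /tau /fupd ffunE eqxx /sw.
case: (eqVneq (w a) j) => [_|neq_j]; first by rewrite eqxx.
case: (eqVneq (w a) k) => [eq_k|neq_k]; last by rewrite (negbTE neq_k).
by rewrite -eq_k eq_sym (negbTE neq_j).
Qed.

(* Under the uniform measure on [{ffun A -> B}] the coordinate [w a] is a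
   fresh uniform draw, independent of the coordinates [H w] depends on. *)
Lemma sum_ffun_fresh_coord :
  INR #|B| * \big[Rplus/0]_(w : {ffun A -> B}) H w (w a) =
  \big[Rplus/0]_(w : {ffun A -> B}) \big[Rplus/0]_(k : B) H w k.
Proof.
rewrite exchange_big /= (partition_big (fun w : {ffun A -> B} => w a) xpredT) //=.
rewrite mulR_sumr; apply: eq_bigr => k _; symmetry.
rewrite (partition_big (fun w : {ffun A -> B} => w a) xpredT) //=.
under eq_bigr => j _ do rewrite (sum_ffun_coord_swap j k).
by rewrite sumR_const; congr (_ * _); apply: eq_bigr => w /eqP ->.
Qed.

End FreshCoordinate.

Lemma vr_sqerr_eq d n (grad : 'I_n -> vec d -> vec d) (xtil x : vec d) It :
  vr_sqerr grad xtil (gradF grad xtil) It x =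
  \big[Rplus/0]_(j < d)
    ((/ INR (size It) * \big[Rplus/0]_(i <- It) (grad i x j - grad i xtil j)
      - / INR n * \big[Rplus/0]_(i < n) (grad i x j - grad i xtil j)) *
     (/ INR (size It) * \big[Rplus/0]_(i <- It) (grad i x j - grad i xtil j)
      - / INR n * \big[Rplus/0]_(i < n) (grad i x j - grad i xtil j))).
Proof.
rewrite /vr_sqerr /dot; apply: eq_bigr => j _.
rewrite /vsub /vr_grad /gradF !sumRB.
set A := \big[Rplus/0]_(i < n) grad i x j; set B := \big[Rplus/0]_(i < n) grad i xtil j.
ring.
Qed.

Lemma sum_vr_sqerr_le d n (Om : vec d -> Prop) (grad : 'I_n -> vec d -> vec d) L
    (xtil x : vec d) b :
  (0 < n)%N -> (0 < b)%N -> (forall i, L_smooth Om (grad i) L) -> Om x -> Om xtil ->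
  \big[Rplus/0]_(k : b.-tuple 'I_n) vr_sqerr grad xtil (gradF grad xtil) k x <=
  INR #|{: b.-tuple 'I_n}| / INR b * (L * L * (vnorm (vsub x xtil) * vnorm (vsub x xtil))).
Proof.
move=> n_gt0 b_gt0 smooth Omx Omxtil.
have n_pos : 0 < INR n by apply: lt_0_INR; apply/ltP.
have b_pos : 0 < INR b by apply: lt_0_INR; apply/ltP.
set K := INR _; set N := vnorm _.
have grad_sqr_le i :
    \big[Rplus/0]_(j < d) ((grad i x j - grad i xtil j) * (grad i x j - grad i xtil j))
    <= L * L * (N * N).
  rewrite -[X in X <= _]/(dot (vsub (grad i x) (grad i xtil)) (vsub (grad i x) (grad i xtil))).
  rewrite -vnorm_sqr; have := smooth i _ _ Omx Omxtil; rewrite -/N.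
  by have := vnorm_ge0 (vsub (grad i x) (grad i xtil)); nra.
under eq_bigr => k _ do rewrite vr_sqerr_eq size_tuple.
rewrite exchange_big /=.
pose a (i : 'I_n) (j : 'I_d) := grad i x j - grad i xtil j.
apply: (Rle_trans _ (\big[Rplus/0]_(j < d)
  (K / (INR b * INR n) * \big[Rplus/0]_(i < n) (a i j * a i j)))).
  by apply: leR_sum => j _; exact: (minibatch_variance_le (a^~ j) n_gt0 b_gt0).
rewrite -mulR_sumr exchange_big /=.
apply: (Rle_trans _ (K / (INR b * INR n) * \big[Rplus/0]_(i < n) (L * L * (N * N)))).
  apply: Rmult_le_compat_l; last by apply: leR_sum => i _; exact: grad_sqr_le.
  by apply: Rmult_le_pos; [exact: pos_INR | left; apply: Rinv_0_lt_compat; nra].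
by rewrite sumR_const card_ord; right; field; lra.
Qed.

Lemma sample_path_ord S m b n (w : samples S m b n) (s : 'I_S) (t : 'I_m) :
  sample_path w s t = tval (w (s, t)).
Proof. by rewrite /sample_path !valK. Qed.

Lemma sample_path_fupd S m b n (w : samples S m b n) (s : 'I_S) (t : 'I_m) k (s' t' : nat) :
  s' != s \/ t' != t -> sample_path (fupd w (s, t) k) s' t' = sample_path w s' t'.
Proof.
move=> neq; rewrite /sample_path.
case: insubP => [s1 _ es1|_] //; case: insubP => [t1 _ et1|_] //.
rewrite /fupd ffunE; case: eqP => // -[eq_s eq_t].
by subst; case: neq; rewrite eqxx.
Qed.

Section Sampling.
Variables (d n : nat) (grad : 'I_n -> vec d -> vec d) (lmo : vec d -> vec d).
Variables (Om : vec d -> Prop) (D gam L : R) (x0 : vec d) (S m b : nat).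
Hypothesis convOm : convex_set Om.
Hypothesis diamOm : has_diameter Om D.
Hypothesis lmoOm : is_lmo Om lmo.
Hypothesis gam01 : 0 <= gam <= 1.
Hypothesis smooth : forall i, L_smooth Om (grad i) L.
Hypothesis Omx0 : Om x0.
Hypothesis n_gt0 : (0 < n)%N.
Hypothesis b_gt0 : (0 < b)%N.

Notation Xt w s := (snapshot grad lmo (fun _ => gam) m x0 (sample_path w) s).
Notation X w s t := (svfw_iter grad lmo (fun _ => gam) m x0 (sample_path w) s t).

Lemma snapshot_fupd (w : samples S m b n) (s : 'I_S) (t : 'I_m) k :
  Xt (fupd w (s, t) k) s = Xt w s.
Proof.
apply: snapshot_ext => s' t' lt_s's; apply: sample_path_fupd; left.
by rewrite neq_ltn lt_s's.
Qed.

Lemma svfw_iter_fupd (w : samples S m b n) (s : 'I_S) (t : 'I_m) k :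
  X (fupd w (s, t) k) s t = X w s t.
Proof.
rewrite /svfw_iter snapshot_fupd; apply: inner_iter_ext => t' lt_t't.
by apply: sample_path_fupd; right; rewrite neq_ltn lt_t't.
Qed.

(* The minibatch of step [(s, t)] is independent of the iterate it is evaluated at. *)
Lemma expected_vr_sqerr_le (s : 'I_S) (t : 'I_m) :
  \big[Rplus/0]_(w : samples S m b n)
     vr_sqerr grad (Xt w s) (gradF grad (Xt w s)) (sample_path w s t) (X w s t)
  <= INR #|samples S m b n| * (L * L * ((INR t * gam * D) * (INR t * gam * D)) / INR b).
Proof.
have b_pos : 0 < INR b by apply: lt_0_INR; apply/ltP.
pose H (w : samples S m b n) (k : b.-tuple 'I_n) :=
  vr_sqerr grad (Xt w s) (gradF grad (Xt w s)) k (X w s t).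
have H_fupd w k k' : H (fupd w (s, t) k') k = H w k.
  by rewrite /H svfw_iter_fupd snapshot_fupd.
set K := INR #|{: b.-tuple 'I_n}|.
have K_pos : 0 < K.
  by rewrite /K card_tuple card_ord; apply: lt_0_INR; apply/ltP; rewrite expn_gt0 n_gt0.
set c := L * L * _ / INR b.
have sum_H_le w : \big[Rplus/0]_(k : b.-tuple 'I_n) H w k <= K * c.
  have Omxt : Om (Xt w s) by apply: snapshot_in.
  have Omx : Om (X w s t) by apply: inner_iter_in.
  apply: Rle_trans (sum_vr_sqerr_le n_gt0 b_gt0 smooth Omx Omxt) _.
  have := inner_iter_dist grad convOm diamOm lmoOm gam01 (gradF grad (Xt w s))
            (sample_path w s) t Omxt.
  rewrite -/K /c; set N := vnorm _ => N_le.
  have N_ge0 : 0 <= N := vnorm_ge0 _.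
  apply: (Rle_trans _ (K / INR b * (L * L * ((INR t * gam * D) * (INR t * gam * D))))).
    apply: Rmult_le_compat_l; first by apply: Rmult_le_pos; [lra | left; apply: Rinv_0_lt_compat].
    by apply: Rmult_le_compat_l; nra.
  by right; field; lra.
have Ew w : vr_sqerr grad (Xt w s) (gradF grad (Xt w s)) (sample_path w s t) (X w s t)
    = H w (w (s, t)) by rewrite /H sample_path_ord.
apply: (Rmult_le_reg_l K) => //.
rewrite (eq_bigr _ (fun w _ => Ew w)) /K sum_ffun_fresh_coord // -/K.
apply: (Rle_trans _ (\big[Rplus/0]_(w : samples S m b n) (K * c))).
  by apply: leR_sum => w _; exact: sum_H_le.
by rewrite sumR_const; right; ring.
Qed.

Lemma sum_expected_vr_sqerr_le : (m ^ 2 <= b)%N ->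
  \big[Rplus/0]_(w : samples S m b n) \big[Rplus/0]_(s < S) \big[Rplus/0]_(t < m)
     vr_sqerr grad (Xt w s) (gradF grad (Xt w s)) (sample_path w s t) (X w s t)
  <= INR (m * S) * (INR #|samples S m b n| * (L * L * (gam * gam * (D * D)))).
Proof.
move=> mm_le_b; set W := INR #|samples S m b n|.
have W_ge0 : 0 <= W := pos_INR _.
rewrite exchange_big /=; under eq_bigr => s _ do rewrite exchange_big /=.
apply: (Rle_trans _ (\big[Rplus/0]_(s < S) \big[Rplus/0]_(t < m)
  (W * (L * L * (gam * gam * (D * D)))))); last first.
  by rewrite !sumR_const !card_ord mult_INR; right; ring.
apply: leR_sum => s _; apply: leR_sum => t _.
apply: Rle_trans (expected_vr_sqerr_le s t) _.
apply: Rmult_le_compat_l => //.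
have b_pos : 0 < INR b by apply: lt_0_INR; apply/ltP.
set Z := L * L * (gam * gam * (D * D)).
have Z_ge0 : 0 <= Z by rewrite /Z; apply: Rmult_le_pos; nra.
have tt_le : INR t * INR t <= INR b.
  rewrite -mult_INR; apply: le_INR; apply/leP.
  by apply: (leq_trans _ mm_le_b); rewrite multE mulnn leq_exp2r // ltnW.
have -> : L * L * (INR t * gam * D * (INR t * gam * D)) / INR b =
          Z * (INR t * INR t / INR b) by rewrite /Z; field; lra.
have : INR t * INR t / INR b <= 1.
  by apply: (Rmult_le_reg_r (INR b)) => //; rewrite /Rdiv Rmult_assoc Rinv_l; lra.
nra.
Qed.

End Sampling.

Lemma svfw_gap_sum_le d n (Om : vec d -> Prop) (f : 'I_n -> vec d -> R) grad lmo D L gam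
    (xstar x0 : vec d) m S (P : nat -> nat -> seq 'I_n) :
  (0 < n)%N -> convex_set Om -> has_diameter Om D -> is_lmo Om lmo -> 0 <= gam <= 1 ->
  0 < L -> (forall i, has_gradient (f i) (grad i)) -> (forall i, L_smooth Om (grad i) L) ->
  (forall x, Om x -> Favg f xstar <= Favg f x) -> Om x0 ->
  let Xt s := snapshot grad lmo (fun _ => gam) m x0 P s in
  let X s t := svfw_iter grad lmo (fun _ => gam) m x0 P s t in
  gam * \big[Rplus/0]_(s < S) \big[Rplus/0]_(t < m) FW_gap Om (gradF grad) (X s t) <=
  Favg f x0 - Favg f xstar + INR (m * S) * (3 / 2 * L * (gam * gam) * (D * D))
  + / (2 * L) * \big[Rplus/0]_(s < S) \big[Rplus/0]_(t < m)
      vr_sqerr grad (Xt s) (gradF grad (Xt s)) (P s t) (X s t).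
Proof.
move=> n_gt0 convOm diamOm lmoOm gam01 L_gt0 gradf smooth xstar_min Omx0 Xt X.
have OmXt s : Om (Xt s) by apply: snapshot_in.
have step s t : gam * FW_gap Om (gradF grad) (X s t) <=
    Favg f (X s t) - Favg f (X s t.+1) + (3 / 2 * L * (gam * gam) * (D * D)
    + / (2 * L) * vr_sqerr grad (Xt s) (gradF grad (Xt s)) (P s t) (X s t)).
  have := inner_step_bound convOm diamOm lmoOm gam01 n_gt0 gradf smooth
            (gradF grad (Xt s)) (P s) t L_gt0 (OmXt s).
  by rewrite /X /svfw_iter -/(Xt s); lra.
rewrite mulR_sumr.
apply: (Rle_trans _ (\big[Rplus/0]_(s < S) \big[Rplus/0]_(t < m)
    (Favg f (X s t) - Favg f (X s t.+1) + (3 / 2 * L * (gam * gam) * (D * D)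
    + / (2 * L) * vr_sqerr grad (Xt s) (gradF grad (Xt s)) (P s t) (X s t))))).
  by apply: leR_sum => s _; rewrite mulR_sumr; apply: leR_sum => t _; apply: step.
(* [X s m] is by definition the next snapshot [Xt s.+1]. *)
have inner_tel s : \big[Rplus/0]_(t < m) (Favg f (X s t) - Favg f (X s t.+1)) =
    Favg f (Xt s) - Favg f (Xt s.+1) := telescope_sumR (fun t => Favg f (X s t)) m.
have outer_tel : \big[Rplus/0]_(s < S) (Favg f (Xt s) - Favg f (Xt s.+1)) =
    Favg f x0 - Favg f (Xt S) := telescope_sumR (fun s => Favg f (Xt s)) S.
under eq_bigr => s _ do rewrite big_split /= inner_tel big_split /= sumR_const card_ord -mulR_sumr.
rewrite big_split /= outer_tel big_split /= sumR_const card_ord -mulR_sumr mult_INR.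
by have := xstar_min _ (OmXt S); lra.
Qed.

Lemma expected_gap_le d n (Om : vec d -> Prop) (f : 'I_n -> vec d -> R) grad lmo D L gam
    (xstar x0 : vec d) m S b :
  (0 < n)%N -> convex_set Om -> has_diameter Om D -> is_lmo Om lmo ->
  0 < gam <= 1 -> 0 < L -> (forall i, has_gradient (f i) (grad i)) ->
  (forall i, L_smooth Om (grad i) L) -> (forall x, Om x -> Favg f xstar <= Favg f x) ->
  Om x0 -> (0 < m)%N -> (0 < S)%N -> (m ^ 2 <= b)%N ->
  expected_gap Om grad lmo (fun _ => gam) m S b x0 <=
  (Favg f x0 - Favg f xstar + 2 * INR (m * S) * (L * (gam * gam) * (D * D)))
  / (INR (m * S) * gam).
Proof.
move=> n_gt0 convOm diamOm lmoOm gam01 L_gt0 gradf smooth xstar_min Omx0 m_gt0 S_gt0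
  mm_le_b.
have gam01' : 0 <= gam <= 1 by lra.
have b_gt0 : (0 < b)%N by apply: leq_trans mm_le_b; rewrite expn_gt0 m_gt0.
set T := INR (m * S); set W := INR #|samples S m b n|.
set Delta := Favg f x0 - Favg f xstar; set C := L * (gam * gam) * (D * D).
have T_pos : 0 < T by apply: lt_0_INR; apply/ltP; rewrite muln_gt0 m_gt0 S_gt0.
have W_pos : 0 < W.
  rewrite /W card_ffun card_tuple card_ord; apply: lt_0_INR; apply/ltP.
  by rewrite !expn_gt0 n_gt0.
rewrite /expected_gap -/T -/W -mulR_sumr.
set SG := \big[Rplus/0]_(w <- _) _.
have sum_gap_le : gam * SG <= W * (Delta + 2 * T * C).
  rewrite /SG mulR_sumr.
  apply: (Rle_trans _ (\big[Rplus/0]_(w : samples S m b n)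
    (Delta + T * (3 / 2 * L * (gam * gam) * (D * D)) + / (2 * L) *
     \big[Rplus/0]_(s < S) \big[Rplus/0]_(t < m)
       vr_sqerr grad (snapshot grad lmo (fun _ => gam) m x0 (sample_path w) s)
         (gradF grad (snapshot grad lmo (fun _ => gam) m x0 (sample_path w) s))
         (sample_path w s t) (svfw_iter grad lmo (fun _ => gam) m x0 (sample_path w) s t)))).
    by apply: leR_sum => w _; exact: svfw_gap_sum_le.
  rewrite big_split /= sumR_const -/W -mulR_sumr.
  have := sum_expected_vr_sqerr_le S convOm diamOm lmoOm gam01' smooth Omx0
            n_gt0 b_gt0 mm_le_b.
  rewrite -/T -/W => err_le.
  have inv2L_ge0 : 0 <= / (2 * L) by left; apply: Rinv_0_lt_compat; lra.
  apply: Rle_trans (Rplus_le_compat_l _ _ _ (Rmult_le_compat_l _ _ _ inv2L_ge0 err_le)) _.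
  by right; rewrite /C; field; lra.
apply: (Rmult_le_reg_l (T * gam)); first nra.
have -> : T * gam * ((Delta + 2 * T * C) / (T * gam)) = Delta + 2 * T * C by field; lra.
have -> : T * gam * (/ W * (/ T * SG)) = / W * (gam * SG) by field; lra.
apply: (Rmult_le_reg_l W) => //; rewrite -Rmult_assoc Rinv_r; lra.
Qed.

Lemma expected_gap_step0_le0 d n (Om : vec d -> Prop) (f : 'I_n -> vec d -> R) grad lmo L
    (x0 : vec d) m S b :
  (0 < n)%N -> convex_set Om -> (forall i, has_gradient (f i) (grad i)) ->
  (forall i, L_smooth Om (grad i) L) -> 0 <= L -> is_lmo Om lmo -> Om x0 ->
  (forall y, Om y -> Favg f x0 <= Favg f y) ->
  expected_gap Om grad lmo (fun _ => 0) m S b x0 <= 0.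
Proof.
move=> n_gt0 convOm gradf smooth L_ge0 lmoOm Omx0 x0_min.
have gap_le0 : FW_gap Om (gradF grad) x0 <= 0 by exact: FW_gap_le0_at_min x0_min.
have inv_ge0 k : 0 <= / INR k.
  have [->|k_gt0] := posnP k; first by rewrite Rinv_0; lra.
  by left; apply/Rinv_0_lt_compat/lt_0_INR/ltP.
rewrite /expected_gap /svfw_iter.
have mul_le0 a x : 0 <= a -> x <= 0 -> a * x <= 0 by move=> *; nra.
apply: (mul_le0 _ _ (inv_ge0 _)); apply: sumR_le0 => w _.
apply: (mul_le0 _ _ (inv_ge0 _)); apply: sumR_le0 => s _; apply: sumR_le0 => t _.
by rewrite snapshot_step0 inner_iter_step0.
Qed.

Lemma constant_step_le1 T L D beta Delta :
  1 <= T -> 0 < L -> 0 < D -> 0 < beta -> 0 <= Delta -> 2 * Delta / (L * D ^ 2) <= beta ->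
  sqrt (Delta / (T * L * D ^ 2 * beta)) <= 1.
Proof.
move=> T_ge1 L_gt0 D_gt0 beta_gt0 Delta_ge0 beta_ge.
have LD_pos : 0 < L * D ^ 2 by apply: Rmult_lt_0_compat => //; apply: pow_lt.
have : 2 * Delta <= beta * (L * D ^ 2).
  by move: beta_ge; rewrite /Rdiv => /(Rmult_le_compat_r _ _ _ (Rlt_le _ _ LD_pos));
     rewrite Rmult_assoc Rinv_l; lra.
move=> Delta_le; rewrite -sqrt_1; apply: sqrt_le_1_alt.
have den_pos : 0 < T * L * D ^ 2 * beta by rewrite 2!Rmult_assoc; apply: Rmult_lt_0_compat; nra.
apply: (Rmult_le_reg_r _ _ _ den_pos); rewrite /Rdiv Rmult_assoc Rinv_l; nra.
Qed.

Lemma constant_step_rate T L D beta Delta :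
  0 < T -> 0 < L -> 0 < D -> 0 < beta -> 0 < Delta ->
  let gam := sqrt (Delta / (T * L * D ^ 2 * beta)) in
  (Delta + 2 * T * (L * (gam * gam) * (D * D))) / (T * gam)
  <= 2 * D / sqrt (T * beta) * sqrt (L * Delta) * (1 + beta).
Proof.
move=> T_gt0 L_gt0 D_gt0 beta_gt0 Delta_gt0 gam.
set a := sqrt (L * Delta); set c := sqrt (T * beta).
have a_pos : 0 < a by apply: sqrt_lt_R0; nra.
have c_pos : 0 < c by apply: sqrt_lt_R0; nra.
have eDelta : Delta = a * a / L by rewrite sqrt_sqrt; [field | ]; nra.
have eT : T = c * c / beta by rewrite sqrt_sqrt; [field | ]; nra.
have cLD_pos : 0 < c * (L * D) by apply: Rmult_lt_0_compat => //; apply: Rmult_lt_0_compat.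
have den_pos : 0 < T * L * D ^ 2 * beta.
  by apply: Rmult_lt_0_compat => //; apply: Rmult_lt_0_compat; [nra | apply: pow_lt].
have gam_eq : gam = a / (c * (L * D)).
  apply: Rsqr_inj; [exact: sqrt_pos | left; exact: Rdiv_lt_0_compat | ].
  rewrite /Rsqr /gam sqrt_sqrt; last by left; apply: Rdiv_lt_0_compat.
  by rewrite {1}eDelta {1}eT; field; lra.
rewrite gam_eq eDelta eT.
have -> : (a * a / L + 2 * (c * c / beta) * (L * (a / (c * (L * D)) * (a / (c * (L * D))))
          * (D * D))) / (c * c / beta * (a / (c * (L * D)))) = (beta + 2) * (D * a / c).
  by field; lra.
have -> : 2 * D / c * a * (1 + beta) = (2 + 2 * beta) * (D * a / c) by field; lra.
apply: Rmult_le_compat_r; last lra.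
by left; apply: Rdiv_lt_0_compat => //; apply: Rmult_lt_0_compat.
Qed.

Theorem theorem3 (d n : nat) (f : 'I_n -> vec d -> R) (grad : 'I_n -> vec d -> vec d)
  (Om : vec d -> Prop) (D L beta : R) (xstar x0 : vec d) (m T : nat)
  (lmo : vec d -> vec d) :
  (0 < n)%N ->
  nonempty_set Om -> convex_set Om -> compact_set Om -> has_diameter Om D ->
  (0 < D) -> (0 < L) ->
  (forall i, has_gradient (f i) (grad i)) ->
  (forall i, L_smooth Om (grad i) L) ->
  Om xstar -> (forall x, Om x -> Favg f xstar <= Favg f x) ->
  Om x0 ->
  (0 < beta) ->
  (beta >= 2 * (Favg f x0 - Favg f xstar) / (L * D ^ 2)) ->
  (1 <= m)%N -> (0 < T)%N -> (m %| T)%N ->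
  is_lmo Om lmo ->
  let gamma : R :=
    sqrt ((Favg f x0 - Favg f xstar) / (INR T * L * D ^ 2 * beta)) in
  (expected_gap Om grad lmo (fun _ => gamma) m (T %/ m)%N (m ^ 2)%N x0
   <= 2 * D / sqrt (INR T * beta) * sqrt (L * (Favg f x0 - Favg f xstar))
      * (1 + beta)).
Proof.
move=> n_gt0 _ convOm _ diamOm D_gt0 L_gt0 gradf smooth _ xstar_min Omx0 beta_gt0 beta_ge
  m_gt0 T_gt0 m_dvd_T lmoOm gamma.
have T_ge1 : 1 <= INR T by apply: (le_INR 1); apply/leP.
have mS_eq : (m * (T %/ m))%N = T by rewrite mulnC divnK.
have S_gt0 : (0 < T %/ m)%N by rewrite divn_gt0 // dvdn_leq.
rewrite {}/gamma; set Delta := Favg f x0 - Favg f xstar in beta_ge *.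
have Delta_ge0 : 0 <= Delta by have := xstar_min _ Omx0; rewrite /Delta; lra.
have [Delta0|Delta_neq0] := Req_dec Delta 0.
  rewrite Delta0 /Rdiv !Rmult_0_l sqrt_0 Rmult_0_r sqrt_0 !Rmult_0_r !Rmult_0_l.
  apply: (expected_gap_step0_le0 _ _ _ n_gt0 convOm gradf smooth (Rlt_le _ _ L_gt0) lmoOm Omx0).
  by move=> y Omy; have := xstar_min _ Omy; rewrite /Delta in Delta0; lra.
have gam_pos : 0 < sqrt (Delta / (INR T * L * D ^ 2 * beta)).
  apply: sqrt_lt_R0; apply: Rdiv_lt_0_compat; first lra.
  apply: Rmult_lt_0_compat => //; apply: Rmult_lt_0_compat; last exact: pow_lt.
  by apply: Rmult_lt_0_compat; lra.
have gam_le1 := constant_step_le1 T_ge1 L_gt0 D_gt0 beta_gt0 Delta_ge0 (Rge_le _ _ beta_ge).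
apply: Rle_trans (expected_gap_le n_gt0 convOm diamOm lmoOm
  (conj gam_pos gam_le1) L_gt0 gradf smooth xstar_min Omx0 m_gt0 S_gt0 (leqnn _)) _.
rewrite mS_eq -/Delta.
by apply: constant_step_rate; lra.
Qed.
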